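(* Every Type $\mathcal A$ affine surface geometry is strongly linearly projectively equivalent to a flat Type $\mathcal A$ affine surface geometry: for every Type $\mathcal A$ connection $\nabla$ on $\mathbb R^2$ there exist a real linear function $L$ and a flat Type $\mathcal A$ connection $\tilde\nabla$ with $\tilde\nabla={}^{-L}\nabla$ (equivalently $\nabla={}^{L}\tilde\nabla$).
   Context: An affine manifold $(M,\nabla)$ is a smooth manifold with a torsion-free connection on $TM$, with Christoffel symbols $\nabla_{\partial_{x^i}}\partial_{x^j}=\Gamma_{ij}^k\partial_{x^k}$. For real constants, $\Gamma(a,b,c,d,e,f)$ denotes the connection on $\mathbb R^2$ whose Christoffel symbols in the standard coordinates $(x^1,x^2)$ are the constants $\Gamma_{11}^1=a$, $\Gamma_{11}^2=b$, $\Gamma_{12}^1=\Gamma_{21}^1=c$, $\Gamma_{12}^2=\Gamma_{21}^2=d$, $\Gamma_{22}^1=e$, $\Gamma_{22}^2=f$; a Type $\mathcal A$ connection (affine surface geometry) is $(\mathbb R^2,\Gamma(a,b,c,d,e,f))$. For $g\in C^\infty(M)$ define ${}^g\nabla_XY:=\nabla_XY+X(g)Y+Y(g)X$. A linear function is $L(x^1,x^2)=a_1x^1+a_2x^2$ with $a_1,a_2\in\mathbb R$; for such $L$, ${}^L\Gamma(a,b,c,d,e,f)=\Gamma(a+2a_1,b,c+a_2,d+a_1,e,f+2a_2)$. Two Type $\mathcal A$ connections $\nabla,\tilde\nabla$ are strongly linearly projectively equivalent if $\tilde\nabla={}^L\nabla$ for some linear function $L$. *)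

From Stdlib Require Import Reals.
Open Scope R_scope.

Inductive idx := I1 | I2.

(* A Type A connection Gamma(a,b,c,d,e,f): constant Christoffel symbols. *)
Record typeA := mkTypeA { ga : R; gb : R; gc : R; gd : R; ge : R; gf : R }.

(* Christoffel symbols Gamma_{ij}^k (torsion free: symmetric in i j). *)
Definition Gam (G : typeA) (i j k : idx) : R :=
  match i, j, k with
  | I1, I1, I1 => ga G
  | I1, I1, I2 => gb G
  | I1, I2, I1 | I2, I1, I1 => gc G
  | I1, I2, I2 | I2, I1, I2 => gd G
  | I2, I2, I1 => ge G
  | I2, I2, I2 => gf G
  end.

(* Curvature components R(d_i,d_j) d_k = R_{ijk}^l d_l.  Since the
   Christoffel symbols are constant, the derivative terms vanish:
   R_{ijk}^l = sum_m (Gamma_{im}^l Gamma_{jk}^m - Gamma_{jm}^l Gamma_{ik}^m). *)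
Definition curv (G : typeA) (i j k l : idx) : R :=
  (Gam G i I1 l * Gam G j k I1 - Gam G j I1 l * Gam G i k I1)
  + (Gam G i I2 l * Gam G j k I2 - Gam G j I2 l * Gam G i k I2).

Definition flat (G : typeA) : Prop := forall i j k l, curv G i j k l = 0.

(* ^L Gamma for the linear function L(x1,x2) = a1 x1 + a2 x2. *)
Definition linmod (a1 a2 : R) (G : typeA) : typeA :=
  mkTypeA (ga G + 2 * a1) (gb G) (gc G + a2) (gd G + a1) (ge G) (gf G + 2 * a2).

(* A Type A connection Gamma(a,b,c,d,e,f) is flat as soon as
   d c = b e,  a d - d^2 + b (f - c) = 0  and  f c - c^2 + e (a - d) = 0.
   Modifying by -L with L = a1 x1 + a2 x2 shifts (a, c, d, f) by
   (-2 a1, -a2, -a1, -2 a2), so writing u, v for the new d, c and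
   A = a - 2d, F = f - 2c (which L does not change) these conditions read
   u v = b e,  u^2 + A u + b (v + F) = 0,  v^2 + F v + e (u + A) = 0.
   For b = 0 they are solved by (u, v) = (-A, 0).  For b <> 0 the second
   equation determines v, and the remaining ones reduce to the cubic
   u^3 + A u^2 + b F u + b^2 e = 0, which has a real root. *)

From Stdlib Require Import Reals Lra Psatz.
Open Scope R_scope.

Lemma cubic_has_root (p q r : R) : exists x, x*x*x + p*(x*x) + q*x + r = 0.
Proof.
  set (f := fun x => x*x*x + p*(x*x) + q*x + r).
  assert (cont_f : continuity f) by (unfold f; reg).
  (* beyond M := 1 + |p| + |q| + |r| the leading term dominates *)
  set (M := 1 + Rabs p + Rabs q + Rabs r).
  assert (hp : - Rabs p <= p <= Rabs p) by (split_Rabs; lra).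
  assert (hq : - Rabs q <= q <= Rabs q) by (split_Rabs; lra).
  assert (hr : - Rabs r <= r <= Rabs r) by (split_Rabs; lra).
  assert (hM : 1 <= M) by (unfold M; pose proof (Rabs_pos p);
    pose proof (Rabs_pos q); pose proof (Rabs_pos r); lra).
  assert (cube_M : M*M*M >= M*M*(1 + Rabs p + Rabs q + Rabs r))
    by (unfold M at 3; nra).
  assert (neg_at_minus_M : f (-M) < 0).
  { unfold f. assert (M*M >= M) by nra.
    assert (p*(M*M) <= Rabs p*(M*M)) by nra.
    assert (-q*M <= Rabs q*M) by nra.
    nra. }
  assert (pos_at_M : 0 < f M).
  { unfold f. assert (M*M >= M) by nra.
    assert (p*(M*M) >= - Rabs p*(M*M)) by nra.
    assert (q*M >= - Rabs q*M) by nra.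
    nra. }
  destruct (IVT f (-M) M cont_f ltac:(lra) neg_at_minus_M pos_at_M)
    as [x [_ fx]].
  exists x; exact fx.
Qed.

Lemma flat_of_relations (G : typeA) :
  gd G * gc G = gb G * ge G ->
  ga G * gd G - gd G * gd G + gb G * (gf G - gc G) = 0 ->
  gf G * gc G - gc G * gc G + ge G * (ga G - gd G) = 0 ->
  flat G.
Proof.
  destruct G as [a b c d e f]; simpl; intros E1 E2 E3 i j k l.
  destruct i, j, k, l; unfold curv, Gam; simpl; nra.
Qed.

Lemma flattening_system_solvable (A b e F : R) :
  exists u v, u*v = b*e /\ u*u + A*u + b*(v + F) = 0
              /\ v*v + F*v + e*(u + A) = 0.
Proof.
  destruct (Req_dec b 0) as [b0 | bn0].
  { exists (-A), 0; subst b; split; [|split]; ring. }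
  destruct (cubic_has_root A (b*F) (b*b*e)) as [u cubic_u].
  set (v := -(u*u + A*u + b*F)/b).
  assert (bv : b*v = -(u*u + A*u + b*F)) by (unfold v; field; exact bn0).
  assert (uv : u*v = b*e).
  { apply (Rmult_eq_reg_l b); [|exact bn0].
    replace (b*(u*v)) with (u*(b*v)) by ring. rewrite bv. lra. }
  exists u, v; split; [exact uv | split; [lra|]].
  apply (Rmult_eq_reg_l b); [|exact bn0].
  replace (b*(v*v + F*v + e*(u + A))) with (v*(b*v) + b*F*v + b*e*(u + A))
    by ring.
  rewrite bv, <- uv; ring.
Qed.

Theorem theorem2p3 (G : typeA) :
  exists (a1 a2 : R) (Gt : typeA), flat Gt /\ Gt = linmod (- a1) (- a2) G.
Proof.
  destruct G as [a b c d e f].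
  destruct (flattening_system_solvable (a - 2*d) b e (f - 2*c))
    as [u [v [E1 [E2 E3]]]].
  exists (d - u), (c - v), (linmod (- (d - u)) (- (c - v)) (mkTypeA a b c d e f)).
  split; [|reflexivity].
  apply flat_of_relations; simpl; nra.
Qed.
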